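(* For every DBI goal formula $\varphi$ there exists a DBI normal formula $\varphi'$ such that $\varphi$ and $\varphi'$ are equivalent over $\mathcal{K}45$, i.e., $\varphi\leftrightarrow\varphi'$ is true at every world of every Kripke model whose frame belongs to $\mathcal{K}45$.
   Context: Agents $\mathcal{A}=\{1,\dots,n\}$, $n>1$; language $\varphi ::= p \mid \neg\varphi \mid (\varphi\wedge\varphi)\mid B_i\varphi$ with standard Kripke semantics ($\mathcal{M},w\vDash B_i\varphi$ iff $\varphi$ holds at all $R_i$-successors of $w$). $\mathcal{K}45$ is the class of all Kripke frames $\langle W,R\rangle$ in which every relation $R_i$ is transitive (if $vR_iu$ and $uR_iw$ then $vR_iw$) and euclidean (if $vR_iu$ and $vR_iw$ then $uR_iw$). Target agents: $\mathsf{ta}(p)=\varnothing$, $\mathsf{ta}(\neg\phi)=\mathsf{ta}(\phi)$, $\mathsf{ta}(\phi\wedge\psi)=\mathsf{ta}(\phi)\cup\mathsf{ta}(\psi)$, $\mathsf{ta}(B_i\phi)=\{i\}$. DBI goal formulas are generated by $\varphi ::= B_i\xi \mid B_i(\xi\wedge\varphi)\mid (\varphi\wedge\varphi)\mid B_i\varphi$, where $\xi$ ranges over purely propositional (modality-free) formulas and $i\in\mathcal{A}$. DBI normal formulas: $B_i\xi$ is always DBI normal; $B_i\varphi$ and $B_i(\xi\wedge\varphi)$ are DBI normal iff $\varphi$ is DBI normal and $i\notin\mathsf{ta}(\varphi)$; $\varphi\wedge\psi$ is DBI normal iff $\varphi$ and $\psi$ are DBI normal and $\mathsf{ta}(\varphi)\cap\mathsf{ta}(\psi)=\varnothing$.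 *)

From mathcomp Require Import all_boot.
Set Implicit Arguments. Unset Strict Implicit. Unset Printing Implicit Defensive.

Inductive form (n : nat) : Type :=
| Var : nat -> form n
| Neg : form n -> form n
| And : form n -> form n -> form n
| Bel : 'I_n -> form n -> form n.

Arguments Var {n} _.

Fixpoint sat (n : nat) (W : Type) (R : 'I_n -> W -> W -> Prop)
    (V : nat -> W -> Prop) (phi : form n) (w : W) : Prop :=
  match phi with
  | Var p => V p w
  | Neg f => ~ sat R V f w
  | And f g => sat R V f w /\ sat R V g w
  | Bel i f => forall u, R i w u -> sat R V f u
  end.

Definition K45 (n : nat) (W : Type) (R : 'I_n -> W -> W -> Prop) : Prop :=
  forall i : 'I_n,
    (forall v u w, R i v u -> R i u w -> R i v w) /\
    (forall v u w, R i v u -> R i v w -> R i u w).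

Fixpoint ta (n : nat) (phi : form n) : {set 'I_n} :=
  match phi with
  | Var _ => set0
  | Neg f => ta f
  | And f g => ta f :|: ta g
  | Bel i _ => [set i]
  end.

Fixpoint propositional (n : nat) (phi : form n) : bool :=
  match phi with
  | Var _ => true
  | Neg f => propositional f
  | And f g => propositional f && propositional g
  | Bel _ _ => false
  end.

Inductive dbi_goal (n : nat) : form n -> Prop :=
| G_Bxi : forall i xi, propositional xi -> dbi_goal (Bel i xi)
| G_Bconj : forall i xi phi, propositional xi -> dbi_goal phi ->
    dbi_goal (Bel i (And xi phi))
| G_and : forall phi psi, dbi_goal phi -> dbi_goal psi -> dbi_goal (And phi psi)
| G_B : forall i phi, dbi_goal phi -> dbi_goal (Bel i phi).

Inductive dbi_normal (n : nat) : form n -> Prop :=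
| N_Bxi : forall i xi, propositional xi -> dbi_normal (Bel i xi)
| N_Bconj : forall i xi phi, propositional xi -> dbi_normal phi ->
    i \notin ta phi -> dbi_normal (Bel i (And xi phi))
| N_and : forall phi psi, dbi_normal phi -> dbi_normal psi ->
    ta phi :&: ta psi = set0 -> dbi_normal (And phi psi)
| N_B : forall i phi, dbi_normal phi -> i \notin ta phi ->
    dbi_normal (Bel i phi).

Definition K45_equiv (n : nat) (phi psi : form n) : Prop :=
  forall (W : Type) (R : 'I_n -> W -> W -> Prop) (V : nat -> W -> Prop),
    K45 R -> forall w : W, sat R V phi w <-> sat R V psi w.

From mathcomp Require Import all_boot.
From Stdlib Require Import Setoid.
Set Implicit Arguments. Unset Strict Implicit. Unset Printing Implicit Defensive.

(* In K45 the operator B_i is idempotent (B_i B_i phi <-> B_i phi), and in any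
   Kripke model it distributes over conjunctions. Hence a goal formula is
   equivalent to a conjunction of chains B_a1 ... B_ak xi, with xi propositional
   and consecutive agents distinct. Grouping the chains by their first agent i,
   each group is equivalent to B_i applied to the propositional ends of its
   length-one chains conjoined with the tails of the longer ones; no tail starts
   with i. By induction on the length of the chains the tails have a normal form
   whose target agents are exactly their first agents, so the group becomes
   normal, and the groups have pairwise distinct target agents. *)

Lemma all_filterW (T : Type) (a p : pred T) s : all a s -> all a (filter p s).
Proof. by rewrite all_filter; apply: sub_all => x ax /=; rewrite ax implybT. Qed.

Section Chains.
Variable n : nat.

Definition chain := (seq 'I_n * form n)%type.

Implicit Types (i j : 'I_n) (f xi : form n) (o : option (form n))
  (x : chain) (L M : seq chain).

Definition chain_form x : form n := foldr (@Bel n) x.2 x.1.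

Definition chain_tail x : chain := (behead x.1, x.2).

Definition good_chain x : bool :=
  [&& x.1 != [::], sorted (fun a b : 'I_n => a != b) x.1 & propositional x.2].

Definition starts_with j x : bool := if x.1 is a :: _ then a == j else false.

Definition heads L : {set 'I_n} := [set j | has (starts_with j) L].

Definition push_box i x : chain :=
  (if starts_with i x then x.1 else i :: x.1, x.2).

Definition top : form n := Neg (And (Var 0) (Neg (Var 0))).

Definition big_and (fs : seq (form n)) : form n := foldr (@And n) top fs.

Definition and_opt f o : form n := oapp (And f) f o.

Lemma all_good_push_box i L :
  all good_chain L -> all good_chain (map (push_box i) L).
Proof.
rewrite all_map; apply: sub_all => -[[|a s] f] //.
rewrite /good_chain /push_box /starts_with /= => /andP[a_s ->].
case: (eqVneq a i) => [_|ai] /=; first by rewrite a_s.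
by rewrite eq_sym ai a_s.
Qed.

Lemma good_chain_tail i x : starts_with i x -> good_chain x ->
  ~~ nilp (chain_tail x).1 ==>
  good_chain (chain_tail x) && ~~ starts_with i (chain_tail x).
Proof.
case: x => [[|a [|b s]] f] //= /eqP->.
by rewrite /good_chain /= eq_sym => /andP[/andP[-> ->] ->].
Qed.

Lemma propositional_big_and fs :
  all (@propositional n) fs -> propositional (big_and fs).
Proof. by elim: fs => //= f fs IH /andP[-> /IH]. Qed.

Lemma notin_heads j L : (j \notin heads L) = all (predC (starts_with j)) L.
Proof. by rewrite inE all_predC. Qed.

Lemma heads_filter (q : pred chain) L :
  heads L = heads (filter q L) :|: heads (filter (predC q) L).
Proof.
apply/setP => j; rewrite !inE; elim: L => //= x L ->.
by case: (q x) => /=; [rewrite orbA | rewrite orbCA].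
Qed.

Lemma heads_const i M : M <> [::] -> all (starts_with i) M -> heads M = [set i].
Proof.
case: M => // x M _ /= /andP[x_i M_i]; apply/setP => j; rewrite !inE /=.
case: (eqVneq j i) => [->|ji]; first by rewrite x_i.
apply/negbTE; rewrite negb_or -all_predC; apply/andP; split.
  by move: x_i; rewrite /starts_with; case: x.1 => // a _ /eqP->; rewrite eq_sym ji.
apply: sub_all M_i => -[[|a s] f]; rewrite /starts_with //= => /eqP->.
by rewrite eq_sym ji.
Qed.

Lemma heads_good_eq0 L : all good_chain L -> heads L = set0 -> L = [::].
Proof.
case: L => // -[[|i s] f] L //= _ /setP/(_ i).
by rewrite !inE /= /starts_with /= eqxx.
Qed.

Section Semantics.
Variables (W : Type) (R : 'I_n -> W -> W -> Prop) (V : nat -> W -> Prop).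

Definition sat_chains L w : Prop :=
  foldr (fun x P => sat R V (chain_form x) w /\ P) True L.

Definition sat_opt o w : Prop := oapp (fun f => sat R V f w) True o.

Lemma sat_chains_cat L M w :
  sat_chains (L ++ M) w <-> sat_chains L w /\ sat_chains M w.
Proof. by elim: L => [|x L IH] /=; [tauto | rewrite IH; tauto]. Qed.

Lemma sat_chains_filter (q : pred chain) L w :
  sat_chains L w <->
  sat_chains (filter q L) w /\ sat_chains (filter (predC q) L) w.
Proof.
by elim: L => [|x L IH] /=; [tauto | case: (q x); rewrite /= IH; tauto].
Qed.

Lemma sat_chains_tail i M w : all (starts_with i) M ->
  sat_chains M w <-> forall u, R i w u -> sat_chains (map chain_tail M) u.
Proof.
elim: M => [|[[|a s] f] M IH] /=; first by split.
  by rewrite /starts_with.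
rewrite /starts_with /= => /andP[/eqP-> /IH->].
split=> [[s_w M_w] u wu | H]; first by split; auto.
by split=> [u /H[]|u /H[]].
Qed.

Lemma sat_chains_big_and L w : all (fun x => nilp x.1) L ->
  sat_chains L w <-> sat R V (big_and [seq x.2 | x <- L]) w.
Proof.
elim: L => [|[[|a s] f] L IH] //=; first by move=> _; tauto.
by move/IH->.
Qed.

Lemma sat_and_opt f o w :
  sat R V (and_opt f o) w <-> sat R V f w /\ sat_opt o w.
Proof. by case: o => /=; tauto. Qed.

Hypothesis R_K45 : K45 R.

Lemma K45_box_box i w (P : W -> Prop) :
  (forall u, R i w u -> forall v, R i u v -> P v) <-> (forall u, R i w u -> P u).
Proof.
have [R_trans R_eucl] := R_K45 i.
split=> [H u wu | H u wu v uv]; last exact: H (R_trans _ _ _ wu uv).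
exact: (H u wu u (R_eucl _ _ _ wu wu)).
Qed.

Lemma sat_push_box i x w :
  sat R V (chain_form (push_box i x)) w <->
  forall u, R i w u -> sat R V (chain_form x) u.
Proof.
case: x => [[|a s] f]; rewrite /push_box /starts_with //=.
case: (eqVneq a i) => [->|_] //=.
by symmetry; apply: K45_box_box.
Qed.

Lemma sat_chains_push_box i L w :
  sat_chains (map (push_box i) L) w <-> forall u, R i w u -> sat_chains L u.
Proof.
elim: L => [|x L IH] /=; first by [].
rewrite sat_push_box IH; split=> [[x_w L_w] u wu | H]; first by split; auto.
by split=> [u /H[]|u /H[]].
Qed.

End Semantics.

Lemma goal_chains phi : dbi_goal phi -> exists L, [/\ L <> [::], all good_chain L &
  forall W (R : 'I_n -> W -> W -> Prop) V, K45 R ->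
    forall w, sat R V phi w <-> sat_chains R V L w].
Proof.
elim=> {phi} [i xi xi_prop | i xi phi xi_prop _ [L [_ L_good phi_L]]
  | phi psi _ [L [L_nil L_good phi_L]] _ [M [_ M_good psi_M]]
  | i phi _ [L [L_nil L_good phi_L]]].
- exists [:: ([:: i], xi)]; split=> //; first by rewrite /= /good_chain /= xi_prop.
  by move=> W R V _ w /=; tauto.
- exists (([:: i], xi) :: map (push_box i) L); split=> //.
    by rewrite /= {1}/good_chain /= xi_prop all_good_push_box.
  move=> W R V R_K45 w /=; rewrite sat_chains_push_box //.
  split=> [H | [H1 H2] u wu]; first by split=> u /H[] // _ /(phi_L _ _ _ R_K45).
  by split; [exact: H1 | apply/(phi_L _ _ _ R_K45); exact: H2].
- exists (L ++ M); split; first by case: L L_nil L_good phi_L.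
    by rewrite all_cat L_good.
  by move=> W R V R_K45 w /=; rewrite sat_chains_cat -phi_L // -psi_M.
- exists (map (push_box i) L); split; first by case: L L_nil L_good phi_L.
    exact: all_good_push_box.
  move=> W R V R_K45 w /=; rewrite sat_chains_push_box //.
  by split=> H u /H /(phi_L _ _ _ R_K45).
Qed.

(* [None] stands for the empty conjunction. *)
Definition normal_form_of o L : Prop :=
  [/\ oapp (@dbi_normal n) True o, oapp (@ta n) set0 o = heads L
    & forall W (R : 'I_n -> W -> W -> Prop) V w,
        sat_opt R V o w <-> sat_chains R V L w].

Definition normalizable k : Prop := forall L, all good_chain L ->
  all (fun x => size x.1 <= k) L -> exists o, normal_form_of o L.

Lemma normal_form_of_nil : normal_form_of None [::].
Proof. by split=> //; apply/setP => j; rewrite !inE. Qed.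

Lemma normal_form_of_starts_with k i M : normalizable k -> M <> [::] ->
  all (starts_with i) M -> all good_chain M -> all (fun x => size x.1 <= k.+1) M ->
  exists chi, normal_form_of (Some chi) M.
Proof.
move=> IHk M_nil M_i M_good M_k.
pose T := map chain_tail M; pose empty (x : chain) := nilp x.1.
pose xi := big_and [seq x.2 | x <- filter empty T]; pose L := filter (predC empty) T.
have /andP[L_good L_i] : all good_chain L && all (predC (starts_with i)) L.
  have M_ig : all (predI (starts_with i) good_chain) M by rewrite all_predI M_i.
  rewrite -all_predI all_filter all_map.
  by apply: sub_all M_ig => x /andP[]; exact: good_chain_tail.
have [o [o_normal o_ta o_sat]] : exists o, normal_form_of o L.
  apply: IHk L_good _; apply: all_filterW; rewrite all_map.
  by apply: sub_all M_k => x /=; rewrite size_behead; case: (size x.1).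
exists (Bel i (and_opt xi o)); split.
- have xi_prop : propositional xi.
    apply: propositional_big_and; rewrite all_map all_filter all_map.
    by apply: sub_all M_good => x /and3P[_ _ x_prop]; rewrite /= x_prop implybT.
  have : i \notin oapp (@ta n) set0 o by rewrite o_ta notin_heads.
  case: o {o_ta o_sat} o_normal => [chi|] /= chi_normal i_chi.
    exact: N_Bconj.
  exact: N_Bxi.
- by rewrite (heads_const M_nil M_i).
move=> W R V w /=; rewrite (sat_chains_tail _ _ _ M_i).
have T_sat u : sat R V (and_opt xi o) u <-> sat_chains R V T u.
  by rewrite sat_and_opt o_sat -sat_chains_big_and ?filter_all // -sat_chains_filter.
by split=> H u /H /T_sat.
Qed.

Lemma normal_form_of_split (q : pred chain) L chi o :
  normal_form_of (Some chi) (filter q L) -> normal_form_of o (filter (predC q) L) ->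
  [disjoint heads (filter q L) & heads (filter (predC q) L)] ->
  normal_form_of (Some (and_opt chi o)) L.
Proof.
move=> [chi_normal chi_ta chi_sat] [o_normal o_ta o_sat] disj.
rewrite /= in chi_normal chi_ta; split.
- case: o o_normal o_ta {o_sat} => [psi|] //= psi_normal psi_ta.
  by apply: N_and => //; apply/eqP; rewrite setI_eq0 chi_ta psi_ta.
- rewrite (heads_filter q) -chi_ta -o_ta.
  by case: o {o_normal o_ta o_sat} => [psi|] /=; rewrite ?setU0.
move=> W R V w /=; rewrite sat_and_opt (sat_chains_filter R V q L).
by move: (chi_sat W R V w) (o_sat W R V w) => /=; tauto.
Qed.

Lemma normalizable_succ k : normalizable k -> normalizable k.+1.
Proof.
move=> IHk L; have [m] := ubnP (size L); elim: m L => // m IHm [|x L] /= size_L.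
  by move=> _ _; exists None; exact: normal_form_of_nil.
case: x => [[|i s] f] //= /andP[x_good L_good] /andP[x_k L_k].
set L1 := (i :: s, f) :: L; set q := starts_with i.
have x_q : q (i :: s, f) by rewrite /q /starts_with /=.
have L1_q : filter q L1 = (i :: s, f) :: filter q L by rewrite /= x_q.
have [chi chi_nf] : exists chi, normal_form_of (Some chi) (filter q L1).
  apply: (normal_form_of_starts_with IHk); first by rewrite L1_q.
  - exact: filter_all.
  - by apply: all_filterW; rewrite /= x_good.
  - by apply: all_filterW; rewrite /= x_k.
have [o o_nf] : exists o, normal_form_of o (filter (predC q) L1).
  apply: IHm; rewrite ?all_filterW //= ?x_good ?x_k //.
  rewrite /= x_q /= size_filter.
  exact: leq_ltn_trans (count_size _ _) size_L.
exists (Some (and_opt chi o)); apply: normal_form_of_split chi_nf o_nf _.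
have q_heads : heads (filter q L1) = [set i].
  by apply: heads_const; [rewrite L1_q | exact: filter_all].
by rewrite q_heads disjoints1 notin_heads filter_all.
Qed.

Lemma normalizable_all k : normalizable k.
Proof.
elim: k => [|k /normalizable_succ //].
by case=> [|[[|i s] f] L] //= _ _; exists None; exact: normal_form_of_nil.
Qed.

Lemma normalize_chains L : all good_chain L -> exists o, normal_form_of o L.
Proof.
move=> L_good.
apply: (normalizable_all (k := foldr maxn 0 [seq size x.1 | x <- L]) L_good).
elim: L {L_good} => //= x L IH; rewrite leq_maxl /=.
by apply: sub_all IH => y /leq_trans; apply; exact: leq_maxr.
Qed.

End Chains.

Theorem lemma1 (n : nat) (Hn : 1 < n) (phi : form n) :
  dbi_goal phi -> exists phi' : form n, dbi_normal phi' /\ K45_equiv phi phi'.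
Proof.
move=> /goal_chains[L [L_nil L_good phi_L]].
have [[chi|] [chi_normal chi_ta chi_L]] := normalize_chains L_good; last first.
  by case: L_nil; apply: heads_good_eq0; rewrite -?chi_ta.
exists chi; split=> // W R V R_K45 w.
by rewrite phi_L // -chi_L.
Qed.
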